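(* Let $S$ be a finite set of states and $I=\{1,\ldots,n\}$. The following two belief aggregation rules $f:\Delta(S)^I\to\Delta(S)$ are anonymous, single-valued, and satisfy Recursive Invariance: (1) for $|I|$ odd, the geometric median $f(\mathbf{p})=\arg\min_{p\in\Delta(S)}\sum_{i\in I}\|p_i-p\|$ (Euclidean norm); (2) the equal-wealth parimutuel price rule, where $f(\mathbf{p})$ is the equilibrium price $\rho$ of the parimutuel equilibrium with equal wealth of the market $(\mathbb{R}^S_+,p_i)_{i\in I}$.
   Context: $\Delta(S)$ is the set of probability distributions on $S$. Recursive Invariance: for all $\mathbf{p}\in\Delta(S)^I$ and $(\lambda_i)_{i\in I}\in[0,1]^I$, $f\big(((1-\lambda_i)p_i+\lambda_i f(\mathbf{p}))_{i\in I}\big)=f(\mathbf{p})$. The parimutuel market $(\mathbb{R}^S_+,p_i)_{i\in I}$ has consumers $i$ with consumption set $\mathbb{R}^S_+$ and linear utility $x\mapsto p_i\cdot x$. A parimutuel equilibrium with equal wealth is a pair $(\rho,\mathbf{x})$ with $\rho\in\Delta(S)$, $\mathbf{x}=(x_1,\ldots,x_n)\in(\mathbb{R}^S_+)^I$, such that (1) for each $i$, $\rho\cdot x_i\le 1/n$ and $p_i\cdot x_i\ge p_i\cdot y$ for all $y\in\mathbb{R}^S_+$ with $\rho\cdot y\le 1/n$; and (2) $\sum_i x_i=(1,\ldots,1)$. *)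

From HB Require Import structures.
From mathcomp Require Import all_boot all_order all_algebra all_fingroup.
From mathcomp Require Import reals.
Set Implicit Arguments. Unset Strict Implicit. Unset Printing Implicit Defensive.
Import Order.TTheory GRing.Theory Num.Theory.
Local Open Scope ring_scope.

Section Defs.
Variables (R : realType) (S : finType) (n : nat).

Definition is_dist (p : S -> R) : Prop :=
  (forall s, 0 <= p s) /\ \sum_(s : S) p s = 1.

Definition profile := 'I_n -> S -> R.

Definition is_profile (p : profile) : Prop := forall i, is_dist (p i).

Definition eucl_dist (p q : S -> R) : R :=
  Num.sqrt (\sum_(s : S) (p s - q s) ^+ 2).

(* A (possibly multi-valued) aggregation rule, given as a relation
   G p q  ==  "q is an output of the rule at profile p". *)
Definition rule := profile -> (S -> R) -> Prop.

Definition single_valued (G : rule) : Prop :=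
  forall p, is_profile p -> exists! q, G p q.

Definition anonymous (G : rule) : Prop :=
  forall (p : profile) q (sigma : {perm 'I_n}),
    is_profile p -> G p q -> G (fun i => p (sigma i)) q.

Definition recursive_invariance (G : rule) : Prop :=
  forall (p : profile) q (lam : 'I_n -> R),
    is_profile p -> (forall i, 0 <= lam i <= 1) -> G p q ->
    G (fun i s => (1 - lam i) * p i s + lam i * q s) q.

Definition geometric_median : rule := fun p q =>
  is_dist q /\
  forall r, is_dist r ->
    \sum_(i < n) eucl_dist (p i) q <= \sum_(i < n) eucl_dist (p i) r.

Definition parimutuel_equilibrium (p : profile) (rho : S -> R)
    (x : 'I_n -> S -> R) : Prop :=
  is_dist rho /\
  (forall i s, 0 <= x i s) /\
  (forall i, \sum_(s : S) rho s * x i s <= n%:R^-1) /\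
  (forall i (y : S -> R), (forall s, 0 <= y s) ->
      \sum_(s : S) rho s * y s <= n%:R^-1 ->
      \sum_(s : S) p i s * y s <= \sum_(s : S) p i s * x i s) /\
  (forall s, \sum_(i < n) x i s = 1).

Definition parimutuel_price : rule := fun p rho =>
  exists x, parimutuel_equilibrium p rho x.

End Defs.

(* The geometric median minimizes a continuous function on the compact simplex.
   If n is odd it is unique: were q1 <> q2 both minimal, so would be their
   midpoint, which forces equality in each triangle inequality
   |(p_i - q1) + (p_i - q2)| <= |p_i - q1| + |p_i - q2|.  Then p_i - q1 and
   p_i - q2 point in the same direction, so |p_i - q1| - |p_i - q2| = +-|q2 - q1|,
   and an odd number of such terms cannot add up to 0.  Moving p_i towards the
   median q by a factor l_i lowers its distance to q by exactly l_i |p_i - q| and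
   its distance to any other point by at most that much: recursive invariance.

   Equal-wealth parimutuel prices are Fisher-market prices.  An allocation x
   maximizing the Eisenberg-Gale product of utilities u_i = p_i . x_i admits no
   profitable transfer of a small amount of a good, so every buyer of good s has
   maximal bang-per-buck p_is / (n u_i); these ratios are equilibrium prices.  In
   any equilibrium (rho, x), p_is <= n u_i rho_s with equality when x_is > 0.
   Comparing two equilibria with utilities u and v gives sum v_i/u_i <= n and
   sum u_i/v_i <= n, hence u = v, and then each rho_s = max_i p_is / (n u_i) is
   determined.  Mixing p_i with rho keeps x_i optimal at prices rho since the
   budget is exhausted. *)

From HB Require Import structures.
From mathcomp Require Import all_boot all_order all_algebra all_fingroup.
From mathcomp Require Import reals.
From mathcomp Require Import all_classical all_reals all_analysis.
From mathcomp Require Import ring lra.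
Import Order.TTheory GRing.Theory Num.Theory.
Import numFieldTopology.Exports numFieldNormedType.Exports.
Set Implicit Arguments. Unset Strict Implicit. Unset Printing Implicit Defensive.
Local Open Scope ring_scope.

Section EuclideanNorm.
Variables (R : realType) (S : finType).
Implicit Types (a b c : S -> R) (k : R).

Definition dot a b := \sum_s a s * b s.
Definition enorm a := Num.sqrt (dot a a).

Lemma dotC a b : dot a b = dot b a.
Proof. by apply: eq_bigr => s _; rewrite mulrC. Qed.

Lemma dotDl a b c : dot (a + b) c = dot a c + dot b c.
Proof. by rewrite -big_split; apply: eq_bigr => s _; rewrite mulrDl. Qed.

Lemma dotZl k a b : dot (k *: a) b = k * dot a b.
Proof. by rewrite mulr_sumr; apply: eq_bigr => s _; rewrite mulrA. Qed.

Lemma dotDr a b c : dot a (b + c) = dot a b + dot a c.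
Proof. by rewrite dotC dotDl !(dotC a). Qed.

Lemma dotZr k a b : dot a (k *: b) = k * dot a b.
Proof. by rewrite dotC dotZl dotC. Qed.

Lemma dot_delta a s : dot a (fun t => (t == s)%:R) = a s.
Proof.
by rewrite /dot (bigD1 s) //= eqxx mulr1 big1 ?addr0 // => t /negbTE ->; rewrite mulr0.
Qed.

Lemma dot_combination k1 k2 a b :
  dot (k1 *: a + k2 *: b) (k1 *: a + k2 *: b) =
  k1 ^+ 2 * dot a a + 2 * k1 * k2 * dot a b + k2 ^+ 2 * dot b b.
Proof.
rewrite !dotDl !dotDr !dotZl !dotZr (dotC b a); ring.
Qed.

Lemma dotvv_ge0 a : 0 <= dot a a.
Proof. by apply: sumr_ge0 => s _; rewrite -expr2 sqr_ge0. Qed.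

Lemma dotvv_eq0 a : dot a a = 0 -> a = 0.
Proof.
move=> a0; apply/funext => s; apply/eqP; rewrite -sqrf_eq0 expr2; apply/eqP.
by apply: (psumr_eq0P _ a0) => // t _; rewrite -expr2 sqr_ge0.
Qed.

Lemma enorm_ge0 a : 0 <= enorm a.
Proof. exact: sqrtr_ge0. Qed.

Lemma enorm_sqr a : enorm a ^+ 2 = dot a a.
Proof. by rewrite sqr_sqrtr // dotvv_ge0. Qed.

Lemma enorm_eq0 a : enorm a = 0 -> a = 0.
Proof. by move=> a0; apply: dotvv_eq0; rewrite -enorm_sqr a0 expr0n. Qed.

Lemma enormZ k a : enorm (k *: a) = `|k| * enorm a.
Proof.
rewrite /enorm dotZl [dot a _]dotC dotZl mulrA -expr2 sqrtrM ?sqr_ge0 //.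
by rewrite sqrtr_sqr.
Qed.

Lemma enormN a : enorm (- a) = enorm a.
Proof. by rewrite -scaleN1r enormZ normrN1 mul1r. Qed.

Lemma dot_le_enormM a b : dot a b <= enorm a * enorm b.
Proof.
have [/dotvv_eq0 ->|a0] := eqVneq (dot a a) 0.
  by rewrite /dot big1 ?mulr_ge0 ?enorm_ge0 // => s _; rewrite mul0r.
have a_gt0 : 0 < enorm a ^+ 2 by rewrite enorm_sqr lt0r a0 dotvv_ge0.
have : dot a b ^+ 2 <= (enorm a * enorm b) ^+ 2.
  have := dotvv_ge0 (dot a b *: a + (- dot a a) *: b).
  rewrite dot_combination -!enorm_sqr.
  rewrite (_ : _ + _ = enorm a ^+ 2 * ((enorm a * enorm b) ^+ 2 - dot a b ^+ 2)).
    by rewrite pmulr_rge0 // subr_ge0.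
  ring.
have : 0 <= enorm a * enorm b by rewrite mulr_ge0 ?enorm_ge0.
move: (enorm a * enorm b) => P; nra.
Qed.

Lemma enormD_sqr a b :
  enorm (a + b) ^+ 2 = enorm a ^+ 2 + 2 * dot a b + enorm b ^+ 2.
Proof.
by rewrite !enorm_sqr -[a]scale1r -[b]scale1r dot_combination !scale1r; ring.
Qed.

Lemma enormD_le a b : enorm (a + b) <= enorm a + enorm b.
Proof.
have := enormD_sqr a b; have := dot_le_enormM a b.
have := enorm_ge0 a; have := enorm_ge0 b; have := enorm_ge0 (a + b).
nra.
Qed.

Lemma enormD_eq a b :
  enorm (a + b) = enorm a + enorm b -> enorm b *: a = enorm a *: b.
Proof.
move=> ab; apply/eqP; rewrite -subr_eq0; apply/eqP/dotvv_eq0.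
have := enormD_sqr a b; rewrite ab -scaleNr dot_combination -!enorm_sqr.
move=> h; have -> : dot a b = enorm a * enorm b by nra.
ring.
Qed.

Lemma enorm_sub_collinear a b :
  enorm b *: a = enorm a *: b -> `|enorm a - enorm b| = enorm (a - b).
Proof.
move=> ab; have [a0|a_neq0] := eqVneq (enorm a) 0.
  by rewrite a0 (enorm_eq0 a0) sub0r normrN sub0r enormN ger0_norm ?enorm_ge0.
have a_gt0 : 0 < enorm a by rewrite lt_def a_neq0 enorm_ge0.
apply: (mulIf a_neq0); rewrite [RHS]mulrC -enormZ -[in RHS](ger0_norm (ltW a_gt0)).
by rewrite -enormZ scalerBl ab scalerBr.
Qed.

Lemma enorm_sub_toward a q r l : 0 <= l <= 1 ->
  enorm (a - r) - enorm (a - q) <=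
  enorm ((1 - l) *: a + l *: q - r) - enorm ((1 - l) *: a + l *: q - q).
Proof.
case/andP=> l_ge0 l_le1.
have -> : (1 - l) *: a + l *: q = a - l *: (a - q).
  by rewrite scalerBl scale1r scalerBr opprB -addrA (addrC (- _)).
have -> : a - l *: (a - q) - q = (1 - l) *: (a - q) by rewrite addrAC scalerBl scale1r.
have : enorm (a - r) <= enorm (l *: (a - q)) + enorm (a - l *: (a - q) - r).
  have -> : a - r = l *: (a - q) + (a - l *: (a - q) - r).
    by rewrite addrA addrCA subrr addr0.
  exact: enormD_le.
rewrite !enormZ !ger0_norm ?subr_ge0 //; lra.
Qed.

End EuclideanNorm.

Section RealSums.
Variables (R : realType) (I : finType).
Implicit Types (x y : I -> R) (c : R).

Lemma ler_sum_eq x y :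
  (forall i, x i <= y i) -> \sum_i y i <= \sum_i x i -> forall i, x i = y i.
Proof.
move=> xy yx i; apply/eqP; rewrite eq_sym -subr_eq0; apply/eqP.
apply: (psumr_eq0P (P := predT) (F := fun j => y j - x j)) => // [j _|].
  by rewrite subr_ge0.
apply/eqP; rewrite eq_le sumr_ge0 ?andbT => [|j _]; last by rewrite subr_ge0.
by rewrite sumrB subr_le0.
Qed.

Lemma const_norm_sum_eq0 x c :
  odd #|I| -> (forall i, `|x i| = c) -> \sum_i x i = 0 -> c = 0.
Proof.
move=> I_odd xc x0; pose k := (\sum_i ((x i < 0)%R : nat))%N.
have xE i : x i = c - 2 * c * (x i < 0)%R%:R.
  rewrite -(xc i); case: ltrP => [/ltr0_norm|/ger0_norm] ->.
    by rewrite mulr1; lra.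
  by rewrite mulr0 subr0.
have : c * (#|I|%:R - 2 * k%:R) = 0.
  rewrite -x0 (eq_bigr _ (fun i _ => xE i)) sumrB sumr_const -mulr_sumr natr_sum.
  by rewrite -mulr_natr; ring.
move/eqP; rewrite mulf_eq0 subr_eq0 -natrM eqr_nat => /orP[/eqP //|/eqP nk].
by move: I_odd; rewrite nk mul2n odd_double.
Qed.

Lemma eq_of_sum_ratios_le (u v : I -> R) :
  (forall i, 0 < u i) -> (forall i, 0 < v i) ->
  \sum_i v i / u i <= #|I|%:R -> \sum_i u i / v i <= #|I|%:R ->
  forall i, u i = v i.
Proof.
move=> u_gt0 v_gt0 vu uv i.
have ratioE j : v j / u j + u j / v j - 2 = (u j - v j) ^+ 2 / (u j * v j).
  by field; rewrite !gt_eqF.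
have two_le j : 2 <= v j / u j + u j / v j.
  by rewrite -subr_ge0 ratioE divr_ge0 ?sqr_ge0 ?mulr_ge0 ?ltW.
have sum_le : \sum_j (v j / u j + u j / v j) <= \sum_(j : I) 2.
  by rewrite big_split sumr_const -[2]/(1 + 1 : R) mulrnDl; exact: lerD.
move/eqP: (ler_sum_eq two_le sum_le i).
rewrite eq_sym -subr_eq0 ratioE mulf_eq0 invr_eq0.
rewrite (gt_eqF (mulr_gt0 (u_gt0 i) (v_gt0 i))) orbF.
by rewrite sqrf_eq0 subr_eq0 => /eqP.
Qed.

End RealSums.

Section UnitBoxMaximum.
Variable R : realType.
Local Open Scope classical_set_scope.

Lemma continuous_sum (T : topologicalType) (J : Type) (r : seq J) (P : pred J)
    (f : J -> T -> R) :
  (forall j, continuous (f j)) -> continuous (fun t => \sum_(j <- r | P j) f j t).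
Proof.
move=> fc; rewrite (_ : (fun t => _) = \sum_(j <- r | P j) f j).
  apply: (big_ind (fun g : T -> R => continuous g)) => //; first exact: cst_continuous.
  by move=> g h gc hc t; exact: continuousD (gc t) (hc t).
by apply/funext => t; rewrite fct_sumE.
Qed.

Lemma continuous_prod (T : topologicalType) (J : Type) (r : seq J) (P : pred J)
    (f : J -> T -> R) :
  (forall j, continuous (f j)) -> continuous (fun t => \prod_(j <- r | P j) f j t).
Proof.
move=> fc; rewrite (_ : (fun t => _) = \prod_(j <- r | P j) f j).
  apply: (big_ind (fun g : T -> R => continuous g)) => //; first exact: cst_continuous.
  by move=> g h gc hc t; exact: continuousM (gc t) (hc t).
by apply/funext => t; rewrite fct_prodE.
Qed.

Lemma closed_forall_preimage (T : topologicalType) (J : Type) (f : J -> T -> R)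
    (A : set R) :
  (forall j, continuous (f j)) -> closed A -> closed [set t | forall j, A (f j t)].
Proof.
move=> fc Ac; rewrite (_ : [set t | _] = \bigcap_j (f j @^-1` A)).
  by apply: closed_bigI => j _; apply: preimage_closed => // t _; exact: fc.
by apply/seteqP; split=> [t At j _|t At j]; exact: At.
Qed.

Lemma unit_box_argmax (T : finType) (A : set {ptws T -> R}) (g : {ptws T -> R} -> R) :
  closed A -> A !=set0 -> (forall q, A q -> forall t, 0 <= q t <= 1) ->
  continuous g -> exists2 q, A q & forall q', A q' -> g q' <= g q.
Proof.
move=> Ac A0 Abox gc.
have : compact A.
  rewrite (_ : A = [set q | forall t, `[0, 1] (q t)] `&` A).
    exact/(compact_closedI _ Ac)/(tychonoff (fun _ => @segment_compact R 0 1)).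
  apply/seteqP; split=> [q Aq|q [] //]; split=> // t.
  by rewrite /= in_itv; exact: Abox.
move=> /(compact_EVT_max A0)/(_ (continuous_subspaceT gc))[q /set_mem Aq qmax].
by exists q => // q' Aq'; apply: qmax; rewrite inE.
Qed.

End UnitBoxMaximum.

Section GeometricMedian.
Variables (R : realType) (S : finType) (n : nat).
Local Notation median := (@geometric_median R S n).
Implicit Types (p : profile R S n) (q r : S -> R).

Lemma eucl_distE (a b : S -> R) : eucl_dist a b = enorm (a - b).
Proof. by congr Num.sqrt; apply: eq_bigr => s _; rewrite expr2. Qed.

Lemma dist_le1 q : is_dist q -> forall s, q s <= 1.
Proof.
by move=> [q_ge0 <-] s; rewrite (bigD1 s) //= lerDl sumr_ge0.
Qed.

Lemma dist_midpoint q r : is_dist q -> is_dist r -> is_dist (2^-1 *: (q + r)).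
Proof.
move=> [q_ge0 q1] [r_ge0 r1]; split=> [s|].
  by rewrite fctE mulr_ge0 ?invr_ge0 ?addr_ge0.
rewrite -mulr_sumr big_split /= q1 r1; lra.
Qed.

Lemma continuous_eucl_dist a : continuous (eucl_dist a : {ptws S -> R} -> R).
Proof.
have sqc : continuous (fun q : {ptws S -> R} => \sum_s (a s - q s) ^+ 2).
  apply: continuous_sum => s q.
  exact: continuous_comp
    (continuousB (@cst_continuous _ _ (a s) q) (@proj_continuous _ _ s q))
    (@exprn_continuous R 2 _).
by move=> q; exact: continuous_comp (sqc q) (@sqrt_continuous R _).
Qed.

Lemma geometric_median_exists p : (0 < n)%N -> is_profile p -> exists q, median p q.
Proof.
move=> n_gt0 p_dist.
pose F (q : {ptws S -> R}) := - \sum_i eucl_dist (p i) q.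
have [q q_dist q_max] : exists2 q, is_dist q & forall r, is_dist r -> F r <= F q.
  apply: (@unit_box_argmax R S [set q | (forall s, 0 <= q s) /\ \sum_s q s = 1]).
  - have sum_cont : continuous (fun q : {ptws S -> R} => \sum_s q s).
      by apply: continuous_sum => s; exact: proj_continuous.
    have total :=
      preimage_closed (fun (q : {ptws S -> R}) _ => sum_cont q) (@closed_eq R 1).
    have nonneg := closed_forall_preimage (f := fun s (q : {ptws S -> R}) => q s)
      (fun s => @proj_continuous _ _ s) (@closed_ge R 0).
    exact: (@closedI _ _ _ nonneg total).
  - by exists (p (Ordinal n_gt0)); exact: p_dist.
  - by move=> q q_dist s; rewrite (dist_le1 q_dist) andbT; case: q_dist.
  - move=> q; apply: continuousN; apply: continuous_sum => i.
    exact: continuous_eucl_dist.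
by exists q; split=> // r r_dist; rewrite -lerN2; exact: q_max.
Qed.

Lemma geometric_median_unique p q1 q2 :
  odd n -> median p q1 -> median p q2 -> q1 = q2.
Proof.
move=> n_odd [q1_dist q1_min] [q2_dist q2_min].
have sumE q : \sum_i eucl_dist (p i) q = \sum_i enorm (p i - q).
  by apply: eq_bigr => i _; exact: eucl_distE.
pose a i := enorm (p i - q1); pose b i := enorm (p i - q2).
have a_min r : is_dist r -> \sum_i a i <= \sum_i enorm (p i - r).
  by move=> r_dist; rewrite -!sumE; exact: q1_min.
have sum_ab : \sum_i a i = \sum_i b i.
  by apply/le_anti; rewrite a_min //= -!sumE q2_min.
pose m := 2^-1 *: (q1 + q2).
have mid i : p i - m = 2^-1 *: ((p i - q1) + (p i - q2)).
  rewrite addrACA -opprD scalerBr -mulr2n -[p i *+ 2]scaler_nat scalerA.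
  by rewrite mulVf ?scale1r.
have tight i : enorm ((p i - q1) + (p i - q2)) = a i + b i.
  apply: ler_sum_eq (fun i => enormD_le _ _) _ i.
  have mid_norm j : enorm (p j - m) = 2^-1 * enorm ((p j - q1) + (p j - q2)).
    by rewrite mid enormZ ger0_norm.
  have := a_min m (dist_midpoint q1_dist q2_dist).
  rewrite (eq_bigr _ (fun j _ => mid_norm j)) -mulr_sumr big_split /= -sum_ab.
  lra.
have ab i : `|a i - b i| = enorm (q2 - q1).
  rewrite enorm_sub_collinear; last exact: enormD_eq.
  by rewrite opprB addrC addrA subrK.
have : enorm (q2 - q1) = 0.
  by apply: const_norm_sum_eq0 ab _; rewrite ?card_ord // sumrB sum_ab subrr.
by move/enorm_eq0/eqP; rewrite subr_eq0 => /eqP.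
Qed.

Lemma eucl_dist_sub_toward (a q r : S -> R) l : 0 <= l <= 1 ->
  eucl_dist a r - eucl_dist a q <=
  eucl_dist (fun s => (1 - l) * a s + l * q s) r -
  eucl_dist (fun s => (1 - l) * a s + l * q s) q.
Proof. by rewrite !eucl_distE; exact: enorm_sub_toward. Qed.

Lemma geometric_median_recursive_invariance : recursive_invariance median.
Proof.
move=> p q lam _ lam01 [q_dist q_min]; split=> // r r_dist.
have := ler_sum (P := xpredT) (index_enum _)
  (fun i _ => eucl_dist_sub_toward (p i) q r (lam01 i)).
by rewrite /= !sumrB; have := q_min r r_dist; lra.
Qed.

Lemma geometric_median_anonymous : anonymous median.
Proof.
move=> p q sigma _ [q_dist q_min]; split=> // r r_dist.
have sum_perm (F : 'I_n -> R) : \sum_i F (sigma i) = \sum_i F i.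
  by rewrite [RHS](reindex_inj (@perm_inj _ sigma)).
by rewrite !(sum_perm (fun i => eucl_dist (p i) _)); exact: q_min.
Qed.

End GeometricMedian.

Section ParimutuelMarket.
Variables (R : realType) (S : finType) (n : nat).
Local Notation equilibrium := (@parimutuel_equilibrium R S n).
Local Notation price := (@parimutuel_price R S n).
Implicit Types (p : profile R S n) (rho sig : S -> R) (x y : 'I_n -> S -> R).

Definition allocation x := (forall i s, 0 <= x i s) /\ (forall s, \sum_i x i s = 1).

Lemma allocation_le1 x : allocation x -> forall i s, x i s <= 1.
Proof.
by move=> [x_ge0 x1] i s; rewrite -(x1 s) (bigD1 i) //= lerDl sumr_ge0.
Qed.

Lemma sum_dot_allocation x (r : S -> R) :
  (forall s, \sum_i x i s = 1) -> \sum_i dot r (x i) = \sum_s r s.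
Proof.
move=> x1; rewrite exchange_big; apply: eq_bigr => s _.
by rewrite -mulr_sumr x1 mulr1.
Qed.

Definition transfer x i j s (e : R) : 'I_n -> S -> R :=
  fun k t => x k t + ((k == i)%:R - (k == j)%:R) * e * (t == s)%:R.

Lemma transfer_allocation x i j s e :
  allocation x -> i != j -> 0 <= e <= x j s -> allocation (transfer x i j s e).
Proof.
move=> [x_ge0 x1] i_neq_j /andP[e_ge0 e_le_x]; split=> [k t|t].
  have [->|k_neq_j] := eqVneq k j.
    rewrite /transfer eqxx eq_sym (negbTE i_neq_j) sub0r mulN1r.
    have [->|_] := eqVneq t s; last by rewrite mulr0 addr0.
    by rewrite mulr1 subr_ge0.
  by rewrite /transfer (negbTE k_neq_j) subr0 addr_ge0 ?mulr_ge0.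
have sum_delta (k0 : 'I_n) : \sum_k (k == k0)%:R = 1 :> R.
  by rewrite (bigD1 k0) //= eqxx big1 ?addr0 // => k /negbTE ->.
rewrite /transfer big_split /= x1 -!mulr_suml sumrB !sum_delta subrr.
by rewrite !mul0r addr0.
Qed.

Lemma dot_transfer x i j s e k (a : S -> R) :
  dot a (transfer x i j s e k) = dot a (x k) + ((k == i)%:R - (k == j)%:R) * e * a s.
Proof.
have -> : transfer x i j s e k =
    x k + ((k == i)%:R - (k == j)%:R) * e *: (fun t => (t == s)%:R) by [].
by rewrite dotDr dotZr dot_delta.
Qed.

Lemma equilibriumP p rho x :
  equilibrium p rho x <->
  [/\ is_dist rho, allocation x, forall i, dot rho (x i) <= n%:R^-1 &
      forall i (y : S -> R), (forall s, 0 <= y s) -> dot rho y <= n%:R^-1 ->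
        dot (p i) y <= dot (p i) (x i)].
Proof. by split=> [[? [? [? [? ?]]]]|[? [? ?] ? ?]]. Qed.

Lemma parimutuel_price_anonymous : anonymous price.
Proof.
move=> p rho sigma _ [x /equilibriumP[rho_dist [x_ge0 x1] budget opt]].
exists (fun i => x (sigma i)); apply/equilibriumP.
split=> //; last by move=> i; exact: opt.
split=> [i|s]; first exact: x_ge0.
by rewrite -(x1 s) [RHS](reindex_inj (@perm_inj _ sigma)).
Qed.

Hypothesis n_gt0 : (0 < n)%N.

Lemma sum_invn : \sum_(i < n) n%:R^-1 = 1 :> R.
Proof. by rewrite sumr_const card_ord -[_ *+ n]mulr_natl mulfV // pnatr_eq0 -lt0n. Qed.

Lemma equilibrium_budget p rho x :
  equilibrium p rho x -> forall i, dot rho (x i) = n%:R^-1.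
Proof.
move=> /equilibriumP[[_ rho1] [_ x1] budget _].
apply: ler_sum_eq budget _.
by rewrite sum_dot_allocation // rho1 sum_invn.
Qed.

Lemma equilibrium_bang_per_buck p rho x :
  equilibrium p rho x -> forall i s, p i s <= n%:R * dot (p i) (x i) * rho s.
Proof.
move=> /equilibriumP[[rho_ge0 _] _ _ opt] i s.
pose bet c : S -> R := c *: (fun t => (t == s)%:R).
have dot_bet f c : dot f (bet c) = c * f s by rewrite dotZr dot_delta.
have bet_ge0 c : 0 <= c -> forall t, 0 <= bet c t by move=> c_ge0 t; rewrite mulr_ge0.
have [rho0|rho_neq0] := eqVneq (rho s) 0.
  rewrite rho0 mulr0 leNgt; apply/negP => p_gt0.
  pose c := (`|dot (p i) (x i)| + 1) / p i s.
  have c_ge0 : 0 <= c by rewrite divr_ge0 ?addr_ge0 // ltW.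
  have := opt i (bet c) (bet_ge0 _ c_ge0).
  rewrite !dot_bet rho0 mulr0 invr_ge0 ler0n divfK ?gt_eqF // => /(_ isT).
  by have := ler_norm (dot (p i) (x i)); lra.
have rho_gt0 : 0 < rho s by rewrite lt_def rho_neq0 rho_ge0.
have c_gt0 : 0 < (n%:R * rho s)^-1 by rewrite invr_gt0 mulr_gt0 // ltr0n.
have := opt i (bet (n%:R * rho s)^-1) (bet_ge0 _ (ltW c_gt0)).
rewrite !dot_bet invfM divfK ?gt_eqF // lexx => /(_ isT).
by rewrite [_ * p i s]mulrC mulrA !ler_pdivrMr ?ltr0n // [_ * n%:R]mulrC mulrA.
Qed.

Lemma equilibrium_value_le p rho x : equilibrium p rho x ->
  forall i (y : S -> R), (forall s, 0 <= y s) ->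
  dot (p i) y <= n%:R * dot (p i) (x i) * dot rho y.
Proof.
move=> eq_x i y y_ge0; rewrite /dot mulr_sumr; apply: ler_sum => s _.
by rewrite mulrA ler_wpM2r // equilibrium_bang_per_buck.
Qed.

Lemma equilibrium_utility_gt0 p rho x : is_profile p -> equilibrium p rho x ->
  forall i, 0 < dot (p i) (x i).
Proof.
move=> p_dist eq_x i; have [[_ rho1] _] := eq_x.
have dot1 (a : S -> R) : dot a (fun _ => 1) = \sum_s a s.
  by apply: eq_bigr => s _; rewrite mulr1.
have := equilibrium_value_le eq_x i (fun _ => ler01).
rewrite !dot1 rho1 mulr1 (p_dist i).2 => /(lt_le_trans ltr01).
by rewrite pmulr_rgt0 // ltr0n.
Qed.

Lemma equilibrium_slackness p rho x : equilibrium p rho x ->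
  forall i s, 0 < x i s -> p i s = n%:R * dot (p i) (x i) * rho s.
Proof.
move=> eq_x i s x_gt0; have /equilibriumP[_ [x_ge0 _] _ _] := eq_x.
set u := dot (p i) (x i).
have gap0 : \sum_t (n%:R * u * rho t - p i t) * x i t = 0.
  rewrite (eq_bigr (fun t => n%:R * u * (rho t * x i t) - p i t * x i t)).
    rewrite sumrB -mulr_sumr -/(dot rho (x i)) (equilibrium_budget eq_x).
    by rewrite mulrAC mulfV ?mul1r ?subrr // pnatr_eq0 -lt0n.
  by move=> t _; rewrite mulrBl mulrA.
have gap_ge0 t : 0 <= (n%:R * u * rho t - p i t) * x i t.
  by rewrite mulr_ge0 ?subr_ge0 ?equilibrium_bang_per_buck.
have /eqP := psumr_eq0P (P := xpredT) (fun t _ => gap_ge0 t) gap0 (i := s) isT.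
by rewrite mulf_eq0 (gt_eqF x_gt0) orbF subr_eq0 => /eqP.
Qed.

Lemma equilibrium_utility_unique p rho sig x y : is_profile p ->
  equilibrium p rho x -> equilibrium p sig y ->
  forall i, dot (p i) (x i) = dot (p i) (y i).
Proof.
move=> p_dist eq_x eq_y.
have ratio_le r r' x' y' : equilibrium p r x' -> equilibrium p r' y' ->
    \sum_i dot (p i) (y' i) / dot (p i) (x' i) <= #|'I_n|%:R.
  move=> eq_x' /[dup] eq_y' /equilibriumP[_ [y_ge0 y1] _ _].
  have [[_ r1] _] := eq_x'.
  apply: (@le_trans _ _ (\sum_i n%:R * dot r (y' i))).
    apply: ler_sum => i _.
    rewrite ler_pdivrMr ?(equilibrium_utility_gt0 p_dist eq_x') // mulrAC.
    exact: equilibrium_value_le eq_x' i _ (y_ge0 i).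
  by rewrite -mulr_sumr sum_dot_allocation // r1 mulr1 card_ord.
apply: eq_of_sum_ratios_le (ratio_le _ _ _ _ eq_x eq_y) (ratio_le _ _ _ _ eq_y eq_x).
  exact: equilibrium_utility_gt0 p_dist eq_x.
exact: equilibrium_utility_gt0 p_dist eq_y.
Qed.

Lemma allocation_support x : allocation x -> forall s, exists i, 0 < x i s.
Proof.
move=> [x_ge0 x1] s; have : \sum_i x i s != 0 by rewrite x1 oner_neq0.
by rewrite psumr_neq0 // => /hasP[i _ /andP[_ xi_gt0]]; exists i.
Qed.

Lemma equilibrium_price_unique p rho sig x y : is_profile p ->
  equilibrium p rho x -> equilibrium p sig y -> rho = sig.
Proof.
move=> p_dist eq_x eq_y.
have price_le r r' x' y' : equilibrium p r x' -> equilibrium p r' y' ->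
    forall s, r' s <= r s.
  move=> eq_x' /[dup] eq_y' /equilibriumP[_ y_alloc _ _] s.
  have [i y_gt0] := allocation_support y_alloc s.
  have := equilibrium_bang_per_buck eq_x' i s.
  rewrite (equilibrium_slackness eq_y' y_gt0).
  rewrite -(equilibrium_utility_unique p_dist eq_x' eq_y').
  by rewrite ler_pM2l // mulr_gt0 ?ltr0n ?(equilibrium_utility_gt0 p_dist eq_x').
apply/funext => s; apply/le_anti.
by rewrite (price_le _ _ _ _ eq_x eq_y) (price_le _ _ _ _ eq_y eq_x).
Qed.

Lemma parimutuel_price_recursive_invariance : recursive_invariance price.
Proof.
move=> p rho lam _ lam01 [x eq_x]; exists x.
have budget_eq := equilibrium_budget eq_x.
move/equilibriumP: eq_x => [rho_dist x_alloc budget opt].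
apply/equilibriumP; split=> // i y y_ge0 y_cost.
have lin (z : S -> R) : dot (fun s => (1 - lam i) * p i s + lam i * rho s) z =
    (1 - lam i) * dot (p i) z + lam i * dot rho z.
  by rewrite /dot !mulr_sumr -big_split; apply: eq_bigr => s _ /=; ring.
rewrite !lin budget_eq; have := opt i y y_ge0 y_cost; have /andP[l0 l1] := lam01 i.
nra.
Qed.

Lemma eisenberg_gale_exists p : exists2 x, allocation x &
  forall y, allocation y -> \prod_i dot (p i) (y i) <= \prod_i dot (p i) (x i).
Proof.
pose A := [set q : {ptws ('I_n * S) -> R} |
  (forall t, 0 <= q t) /\ forall s, \sum_i q (i, s) = 1]%classic.
pose G (q : {ptws ('I_n * S) -> R}) := \prod_i \sum_s p i s * q (i, s).
have [q [q_ge0 q1] q_max] : exists2 q, A q & forall q', A q' -> G q' <= G q.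
  apply: unit_box_argmax.
  - have sum_cont s : continuous (fun q : {ptws ('I_n * S) -> R} => \sum_i q (i, s)).
      by apply: continuous_sum => i; exact: proj_continuous.
    have total := closed_forall_preimage sum_cont (@closed_eq R 1).
    have nonneg :=
      closed_forall_preimage (f := fun t (q : {ptws ('I_n * S) -> R}) => q t)
      (fun t => @proj_continuous _ _ t) (@closed_ge R 0).
    exact: (@closedI _ _ _ nonneg total).
  - exists (fun _ => n%:R^-1); split=> [t|s]; first by rewrite invr_ge0.
    exact: sum_invn.
  - move=> q [q_ge0 q1] [i s]; rewrite q_ge0.
    exact: (@allocation_le1 (fun i s => q (i, s))).
  - apply: continuous_prod => i; apply: continuous_sum => s q.
    exact: continuousM (@cst_continuous _ _ (p i s) q) (@proj_continuous _ _ (i, s) q).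
exists (fun i s => q (i, s)) => [|y [y_ge0 y1]]; first by split.
by apply: (q_max (fun t => y t.1 t.2)); split=> [[i s]|].
Qed.

Section EisenbergGale.
Variables (p : profile R S n) (x : 'I_n -> S -> R).
Hypotheses (p_dist : is_profile p) (x_alloc : allocation x).
Hypothesis x_max :
  forall y, allocation y -> \prod_i dot (p i) (y i) <= \prod_i dot (p i) (x i).
Let u i := dot (p i) (x i).

Lemma eisenberg_gale_utility_gt0 i : 0 < u i.
Proof.
have u_ge0 j : 0 <= u j.
  by apply: sumr_ge0 => s _; rewrite mulr_ge0 ?(p_dist j).1 ?x_alloc.1.
have : 0 < \prod_j u j.
  apply: lt_le_trans (x_max (y := fun _ _ => n%:R^-1) _).
    apply: prodr_gt0 => j _.
    by rewrite /dot -mulr_suml (p_dist j).2 mul1r invr_gt0 ltr0n.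
  by split=> [j s|s]; [rewrite invr_ge0 | exact: sum_invn].
rewrite (bigD1 i) //= [0 < u i]lt_def u_ge0 andbT.
by apply: contraTneq => ->; rewrite mul0r ltxx.
Qed.

Lemma eisenberg_gale_transfer s i j : 0 < x j s -> p i s * u j <= p j s * u i.
Proof.
move=> x_gt0; have [-> //|i_neq_j] := eqVneq i j.
rewrite leNgt; apply/negP => gain; rewrite -subr_gt0 in gain.
have [pi_ge0 pj_ge0] : 0 <= p i s /\ 0 <= p j s by split; apply: (p_dist _).1.
have pp1_gt0 : 0 < p i s * p j s + 1 by rewrite ltr_wpDl ?mulr_ge0.
(* Moving [eps] of good [s] from [j] to [i] multiplies [u i * u j] by a factor
   whose first-order gain [eps * (p i s * u j - p j s * u i)] outweighs the
   second-order loss [eps ^+ 2 * p i s * p j s] for this choice of [eps]. *)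
pose eps := Num.min (x j s) ((p i s * u j - p j s * u i) / (p i s * p j s + 1)).
have eps_gt0 : 0 < eps by rewrite lt_min x_gt0 divr_gt0.
have eps_range : 0 <= eps <= x j s by rewrite ltW // ge_min lexx.
have eps_small : eps * (p i s * p j s + 1) <= p i s * u j - p j s * u i.
  by rewrite -ler_pdivlMr // ge_min lexx orbT.
have j_neq_i : j != i by rewrite eq_sym.
have prod_split (F : 'I_n -> R) :
    \prod_k F k = F i * F j * \prod_(k | (k != i) && (k != j)) F k.
  by rewrite (bigD1 i) //= (bigD1 j) //= mulrA.
have others : \prod_(k | (k != i) && (k != j)) dot (p k) (transfer x i j s eps k) =
    \prod_(k | (k != i) && (k != j)) u k.
  apply: eq_bigr => k /andP[ki kj].
  by rewrite dot_transfer (negbTE ki) (negbTE kj) subrr !mul0r addr0.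
have others_gt0 : 0 < \prod_(k | (k != i) && (k != j)) u k.
  by apply: prodr_gt0 => k _; exact: eisenberg_gale_utility_gt0.
have := x_max (transfer_allocation x_alloc i_neq_j eps_range).
rewrite !prod_split others ler_pM2r // !dot_transfer !eqxx.
rewrite (negbTE i_neq_j) (negbTE j_neq_i) subr0 sub0r !mul1r mulN1r -/(u i) -/(u j).
nra.
Qed.

Let ratio i s := p i s / (n%:R * u i).
Let price s := \sum_j x j s * ratio j s.

Lemma eisenberg_gale_ratio_le s i j : 0 < x j s -> ratio i s <= ratio j s.
Proof.
move=> x_gt0; have ui := eisenberg_gale_utility_gt0 i.
have uj := eisenberg_gale_utility_gt0 j.
rewrite /ratio ler_pdivrMr ?mulr_gt0 ?ltr0n // mulrAC ler_pdivlMr ?mulr_gt0 ?ltr0n //.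
rewrite !(mulrCA _ n%:R) ler_pM2l ?ltr0n //; exact: eisenberg_gale_transfer.
Qed.

Lemma eisenberg_gale_ratio_le_price i s : ratio i s <= price s.
Proof.
have -> : ratio i s = \sum_j x j s * ratio i s by rewrite -mulr_suml x_alloc.2 mul1r.
apply: ler_sum => j _; have := x_alloc.1 j s; rewrite le0r => /orP[/eqP->|x_gt0].
  by rewrite !mul0r.
by rewrite ler_pM2l // eisenberg_gale_ratio_le.
Qed.

Lemma eisenberg_gale_price_eq i s : 0 < x i s -> price s = ratio i s.
Proof.
move=> x_gt0; apply/le_anti; rewrite eisenberg_gale_ratio_le_price andbT.
have -> : ratio i s = \sum_j x j s * ratio i s by rewrite -mulr_suml x_alloc.2 mul1r.
by apply: ler_sum => j _; rewrite ler_wpM2l ?x_alloc.1 // eisenberg_gale_ratio_le.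
Qed.

Lemma eisenberg_gale_equilibrium : exists rho, equilibrium p rho x.
Proof.
have n_gt0R : 0 < n%:R :> R by rewrite ltr0n.
have u_gt0 := eisenberg_gale_utility_gt0.
have price_ge0 s : 0 <= price s.
  apply: sumr_ge0 => j _; rewrite mulr_ge0 ?divr_ge0 ?x_alloc.1 ?(p_dist j).1 //.
  by rewrite ltW ?mulr_gt0.
have budget i : dot price (x i) = n%:R^-1.
  transitivity (\sum_s p i s * x i s / (n%:R * u i)).
    apply: eq_bigr => s _; have := x_alloc.1 i s; rewrite le0r => /orP[/eqP->|x_gt0].
      by rewrite !mulr0 mul0r.
    by rewrite (eisenberg_gale_price_eq x_gt0) /ratio mulrAC.
  by rewrite -mulr_suml invfM mulrCA mulfV ?mulr1 // (gt_eqF (u_gt0 i)).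
have price1 : \sum_s price s = 1.
  rewrite -(sum_dot_allocation _ x_alloc.2).
  by rewrite (eq_bigr _ (fun i _ => budget i)) sum_invn.
exists price; apply/equilibriumP; split=> // [i|i y y_ge0 y_cost].
  by rewrite budget.
apply: (@le_trans _ _ (n%:R * u i * dot price y)).
  rewrite /dot mulr_sumr; apply: ler_sum => s _; rewrite mulrA ler_wpM2r //.
  have := eisenberg_gale_ratio_le_price i s.
  by rewrite /ratio ler_pdivrMr ?mulr_gt0 // mulrC.
apply: le_trans (ler_wpM2l (ltW (mulr_gt0 n_gt0R (u_gt0 i))) y_cost) _.
by rewrite mulrAC mulfV ?gt_eqF // mul1r.
Qed.

End EisenbergGale.

End ParimutuelMarket.

Theorem proposition7 (R : realType) (S : finType) (n : nat) :
  (odd n ->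
     single_valued (@geometric_median R S n) /\
     anonymous (@geometric_median R S n) /\
     recursive_invariance (@geometric_median R S n)) /\
  ((0 < n)%N ->
     single_valued (@parimutuel_price R S n) /\
     anonymous (@parimutuel_price R S n) /\
     recursive_invariance (@parimutuel_price R S n)).
Proof.
split=> [n_odd|n_gt0].
  have n_gt0 : (0 < n)%N by case: n n_odd.
  split; last by split; [exact: geometric_median_anonymous
                        | exact: geometric_median_recursive_invariance].
  move=> p p_dist; have [q q_med] := geometric_median_exists n_gt0 p_dist.
  by exists q; split=> // q' q'_med; exact: geometric_median_unique n_odd q_med q'_med.
split; last by split; [exact: parimutuel_price_anonymous
                      | exact: parimutuel_price_recursive_invariance].
move=> p p_dist; have [x x_alloc x_max] := eisenberg_gale_exists n_gt0 p.
have [rho eq_x] := eisenberg_gale_equilibrium n_gt0 p_dist x_alloc x_max.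
exists rho; split; first by exists x.
by move=> rho' [y /(equilibrium_price_unique n_gt0 p_dist eq_x)].
Qed.
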